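(* Every flat ado-semilattice is simple, hence subdirectly irreducible.
   Context: A flat ado-semilattice is an algebra $(S,\sqcup,\cap)$ with an element $0\in S$ such that $a\cap a=a$, $0\cap a=a\cap 0=0$ for all $a$, $a\cap b=0$ for distinct $a,b$, $0\sqcup a=a$ for all $a$, and $a\sqcup b=a$ whenever $a\neq 0$ (so the order is flat: $0$ is least and all other elements are maximal). An algebra is simple if every homomorphism from it into an algebra of the same type is either injective or constant. *)

Definition injective {A B : Type} (f : A -> B) : Prop :=
  forall x y, f x = f y -> x = y.

Definition is_hom {A B : Type} (jA mA : A -> A -> A) (jB mB : B -> B -> B)
  (f : A -> B) : Prop :=
  forall x y, f (jA x y) = jB (f x) (f y) /\ f (mA x y) = mB (f x) (f y).

Definition flat_ado_semilattice (S : Type) (join meet : S -> S -> S) (z : S)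
  : Prop :=
  (forall a, meet a a = a) /\
  (forall a, meet z a = z /\ meet a z = z) /\
  (forall a b, a <> b -> meet a b = z) /\
  (forall a, join z a = a) /\
  (forall a b, a <> z -> join a b = a).

Definition simple_alg (S : Type) (join meet : S -> S -> S) : Prop :=
  forall (B : Type) (jB mB : B -> B -> B) (f : S -> B),
    is_hom join meet jB mB f ->
    injective f \/ (forall x y, f x = f y).

(* Subdirectly irreducible (Birkhoff): whenever a family of homomorphisms
   out of S jointly separates points (i.e. S embeds subdirectly into the
   product of the images), one of them is already injective. *)
Definition subdirectly_irreducible (S : Type) (join meet : S -> S -> S)
  : Prop :=
  forall (I : Type) (A : I -> Type) (jA mA : forall i, A i -> A i -> A i)
         (f : forall i, S -> A i),
    (forall i, is_hom join meet (jA i) (mA i) (f i)) ->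
    (forall x y, (forall i, f i x = f i y) -> x = y) ->
    exists i, injective (f i).

Definition nontrivial (S : Type) : Prop := exists x y : S, x <> y.

(* If a homomorphism f identifies a <> b, then it identifies a = a ∩ a with
   a ∩ b = 0, so f c = f 0 for some c <> 0.  Then f x = f (0 ⊔ x) =
   f (c ⊔ x) = f c for every x, so f is constant.  A simple algebra with
   two distinct elements is subdirectly irreducible, since a separating
   family of homomorphisms cannot consist of constant maps only. *)

From Stdlib Require Import Classical.

Set Implicit Arguments.

Section FlatHomomorphism.

Variables (S B : Type) (join meet : S -> S -> S) (z : S).
Variables (jB mB : B -> B -> B) (f : S -> B).
Hypothesis f_hom : is_hom join meet jB mB f.

Section CollapseToBottom.

Hypothesis meet_idem : forall a, meet a a = a.
Hypothesis meet_distinct : forall a b, a <> b -> meet a b = z.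

Lemma hom_identifies_bottom (a b : S) :
  a <> b -> f a = f b -> exists c, c <> z /\ f c = f z.
Proof.
  intros Hab Hf.
  assert (Ha : f a = f z).
  { rewrite <- (meet_distinct Hab), <- (meet_idem a) at 1.
    destruct (f_hom a a) as [_ ->]; destruct (f_hom a b) as [_ ->].
    now rewrite Hf. }
  destruct (classic (a = z)) as [-> | Haz].
  - exists b; split; [congruence | now rewrite <- Hf].
  - now exists a.
Qed.

End CollapseToBottom.

Section ConstantFromBottom.

Hypothesis join_bottom_l : forall a, join z a = a.
Hypothesis join_nonbottom_l : forall a b, a <> z -> join a b = a.

Lemma hom_const_of_identifies_bottom (c : S) :
  c <> z -> f c = f z -> forall x, f x = f c.
Proof.
  intros Hcz Hfc x.
  rewrite <- (join_bottom_l x) at 1.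
  destruct (f_hom z x) as [-> _]; destruct (f_hom c x) as [Hcx _].
  now rewrite <- Hfc, <- Hcx, join_nonbottom_l.
Qed.

End ConstantFromBottom.

End FlatHomomorphism.

Lemma flat_ado_semilattice_simple (S : Type) (join meet : S -> S -> S) (z : S) :
  flat_ado_semilattice S join meet z -> simple_alg S join meet.
Proof.
  intros (meet_idem & _ & meet_distinct & join_bottom_l & join_nonbottom_l).
  intros B jB mB f f_hom.
  destruct (classic (injective f)) as [Hinj | Hninj]; [now left | right].
  apply not_all_ex_not in Hninj as [a Hninj].
  apply not_all_ex_not in Hninj as [b Hninj].
  apply imply_to_and in Hninj as [Hf Hab].
  destruct (hom_identifies_bottom f_hom meet_idem meet_distinct Hab Hf)
    as (c & Hcz & Hfc).
  pose proof (hom_const_of_identifies_bottom f_hom join_bottom_l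
                join_nonbottom_l Hcz Hfc) as Hconst.
  intros x y; now rewrite (Hconst x), (Hconst y).
Qed.

Lemma simple_subdirectly_irreducible (S : Type) (join meet : S -> S -> S) :
  simple_alg S join meet -> nontrivial S -> subdirectly_irreducible S join meet.
Proof.
  intros Hsimple (x & y & Hxy) I A jA mA f f_hom f_sep.
  apply NNPP; intro Hnone.
  apply Hxy, f_sep; intro i.
  destruct (Hsimple _ _ _ (f i) (f_hom i)) as [Hinj | Hconst].
  - now exfalso; apply Hnone; exists i.
  - apply Hconst.
Qed.

Theorem corollary4p8 (S : Type) (join meet : S -> S -> S) (z : S) :
  flat_ado_semilattice S join meet z ->
  simple_alg S join meet /\
  (nontrivial S -> subdirectly_irreducible S join meet).
Proof.
  intros Hflat.
  pose proof (flat_ado_semilattice_simple Hflat) as Hsimple.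
  split; [exact Hsimple | exact (simple_subdirectly_irreducible Hsimple)].
Qed.
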